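(* Fix positive integers $m_1,m_2,m_3$. Let $A_1$ be an $m_1\times m_1$ coloring matrix, $A_2$ an $m_1\times m_2$ matrix with entries in $\{0,1\}$, and $B=(b_{ij})$ an $m_3\times m_2$ matrix with entries in $\{0,1\}$. Let $$A=\left[\begin{array}{c|c}A_1&A_2\\\hline0&0\end{array}\right],\qquad A'=\left[\begin{array}{c|c|c}A_1&A_2&0\\\hline0&0&0\\\hline0&B&0\end{array}\right],$$ where the $0$'s are zero blocks of the sizes making $A$ an $(m_1+m_2)\times(m_1+m_2)$ matrix and $A'$ an $(m_1+m_2+m_3)\times(m_1+m_2+m_3)$ matrix. Then $$F_{A'}(x)=F_A(x)+x\sum_{i=1}^{m_3}\frac{1}{1-x\sum_{j=1}^{m_2}b_{ij}}.$$ In particular, for $1\le i\le m_1+m_2$ we have $t^{(i)}_{A'}(n)=t^{(i)}_A(n)$ for all $n\ge1$, and for $m_1+m_2<i\le m_1+m_2+m_3$ we have $$t^{(i)}_{A'}(n)=\Big(\sum_{j=1}^{m_2}b_{i-m_1-m_2,j}\Big)^{n-1}$$ for all $n\ge1$.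
   Context: A plane tree is an unlabeled rooted tree in which the children of every vertex are linearly ordered. A coloring matrix is a square matrix $A=(a_{ij})$ with entries in $\{0,1\}$. An $A$-coloring of a plane tree assigns to each vertex a color (an index of a row of $A$) such that whenever a vertex of color $j$ is a child of a vertex of color $i$, $a_{ij}=1$. Let $t_A(n)$ be the number of pairs (plane tree with $n$ vertices, $A$-coloring of it), $t_A^{(i)}(n)$ the number of those with root color $i$, and $F_A(x)=\sum_{n\ge1}t_A(n)x^n$. *)

From HB Require Import structures.
From mathcomp Require Import all_boot all_order all_algebra.
From mathcomp Require Import finmap.
From mathcomp Require Import boolp classical_sets cardinality.
Set Implicit Arguments.
Unset Strict Implicit.
Unset Printing Implicit Defensive.
Local Open Scope classical_set_scope.

(* A colored plane tree: [GenTree.Node c ts] is a vertex of color c (a 0-based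
   row index of the coloring matrix) whose ordered list of children is ts.
   Leaves of GenTree are never used (they are not valid). A pair
   (plane tree, coloring) is the same thing as such a labelled tree. *)
Definition ctree := GenTree.tree void.

(* entry a_{c d} of A (false if an index is out of range) *)
Definition adj (m : nat) (A : 'M[bool]_m) (c d : nat) : bool :=
  match @insub nat (fun k => k < m) _ c, @insub nat (fun k => k < m) _ d with
  | Some i, Some j => A i j
  | _, _ => false
  end.

Definition root_color (t : ctree) : nat :=
  match t with GenTree.Node c _ => c | GenTree.Leaf _ => 0 end.

Fixpoint tsize (t : ctree) : nat :=
  match t with
  | GenTree.Leaf _ => 1
  | GenTree.Node _ ts => (sumn (map tsize ts)).+1
  end.

Fixpoint valid (m : nat) (A : 'M[bool]_m) (t : ctree) : bool :=
  match t with
  | GenTree.Leaf _ => false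
  | GenTree.Node c ts =>
      [&& c < m, all (fun u => adj A c (root_color u)) ts & all (valid A) ts]
  end.

Definition tA (m : nat) (A : 'M[bool]_m) (n : nat) : nat :=
  #|` fset_set [set t : ctree | valid A t /\ tsize t = n] |%fset.

(* t_A^{(i)}(n), with 0-based color index i *)
Definition tAi (m : nat) (A : 'M[bool]_m) (i n : nat) : nat :=
  #|` fset_set [set t : ctree | valid A t /\ tsize t = n /\ root_color t = i] |%fset.

Definition zmx {m n : nat} : 'M[bool]_(m, n) := const_mx false.

Definition blockA (m1 m2 : nat) (A1 : 'M[bool]_m1) (A2 : 'M[bool]_(m1, m2))
  : 'M[bool]_(m1 + m2) := block_mx A1 A2 zmx zmx.

Definition blockA' (m1 m2 m3 : nat) (A1 : 'M[bool]_m1) (A2 : 'M[bool]_(m1, m2))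
  (B : 'M[bool]_(m3, m2)) : 'M[bool]_(m1 + m2 + m3) :=
  block_mx (blockA A1 A2) zmx (row_mx zmx B) zmx.

From Pilot Require Import Defs.
From HB Require Import structures.
From mathcomp Require Import all_boot all_order all_algebra.
From mathcomp Require Import finmap.
From mathcomp Require Import boolp classical_sets cardinality.
Set Implicit Arguments.
Unset Strict Implicit.
Unset Printing Implicit Defensive.
Local Open Scope classical_set_scope.

(* Rows of A' with index below m1 + m2 are the rows of A padded with zeros, so
   a tree whose root colour is below m1 + m2 only uses such colours, and it is
   A'-coloured exactly when it is A-coloured.  A vertex of colour m1 + m2 + k
   can only have children of colour m1 + j with b_kj = 1, and these are leaves
   because the rows of A' for colours m1 .. m1 + m2 - 1 vanish.  Hence such a
   tree with n vertices is a star, determined by a map from its n - 1 leaves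
   to {j | b_kj = 1}.  Summing t^(i)(n) over the root colour i gives the
   formula.  All the counted sets are finite (so that fset_set does not
   collapse them to the empty set): a coloured tree with n vertices is decoded
   from its GenTree encoding, a word of length at most 2n over a finite
   alphabet. *)

Lemma map_preim_seq (T U : eqType) (P : pred U) (g : U -> T) (s : seq T) :
  (forall x, x \in s -> exists2 y, P y & x = g y) ->
  exists2 ys, all P ys & s = map g ys.
Proof.
elim: s => [|x s IH] hs; first by exists [::].
have [y Py ->] := hs x (mem_head x s).
have [|ys Pys ->] := IH; first by move=> z hz; apply/hs/mem_behead.
by exists (y :: ys); rewrite //= Py.
Qed.

Lemma card_fset_set_inj_image (T U : choiceType) (f : T -> U) (X : set T) :
  injective f -> finite_set X -> #|` fset_set (f @` X)| = #|` fset_set X|.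
Proof. by move=> f_inj finX; rewrite fset_set_image // card_imfset. Qed.

Lemma card_fset_set_fin (T : finType) (P : pred T) :
  #|` fset_set [set x | P x]| = #|P|.
Proof.
rewrite -card_finset; congr (#|` _|); apply/fsetP => x.
rewrite in_fset_set; last exact: finite_finset.
by apply/idP/idP; rewrite !inE.
Qed.

Lemma finite_seqs_in (T : choiceType) (s0 : seq T) N :
  finite_set [set s : seq T | size s <= N /\ {subset s <= s0}].
Proof.
elim: N => [|N IH].
  apply: (sub_finite_set _ (finite_set1 [::])) => s [] /=.
  by rewrite leqn0 => /nilP.
have fin_cons :=
  finite_image (fun p => p.1 :: p.2) (finite_setX (finite_seq s0) IH).
apply: (sub_finite_set (B := [set [::]] `|` _)); last first.
  by rewrite finite_setU; split; [exact: finite_set1 | exact: fin_cons].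
case=> [|x s] [hs hsub]; [by left | right].
exists (x, s) => //; split => /=; first exact/hsub/mem_head.
by split => // y hy; apply/hsub/mem_behead.
Qed.

Definition mxentry (r s : nat) (M : 'M[bool]_(r, s)) (c d : nat) : bool :=
  match @insub nat (fun k => k < r) _ c, @insub nat (fun k => k < s) _ d with
  | Some i, Some j => M i j
  | _, _ => false
  end.

Lemma adjE m (A : 'M[bool]_m) : adj A =2 mxentry A.
Proof. by []. Qed.

Section MatrixEntries.
Variables (r s : nat).
Implicit Types (M : 'M[bool]_(r, s)) (c d : nat).

Lemma mxentry_ord M (i : 'I_r) (j : 'I_s) : mxentry M i j = M i j.
Proof. by rewrite /mxentry !valK. Qed.

Lemma mxentry_bound M c d : mxentry M c d -> (c < r) && (d < s).
Proof.
by rewrite /mxentry; case: insubP => [i -> _|//]; case: insubP => [j -> _|].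
Qed.

Lemma mxentry_outl M c d : r <= c -> mxentry M c d = false.
Proof. by rewrite leqNgt; apply: contraNF => /mxentry_bound/andP[]. Qed.

Lemma mxentry_outr M c d : s <= d -> mxentry M c d = false.
Proof. by rewrite leqNgt; apply: contraNF => /mxentry_bound/andP[]. Qed.

Lemma mxentry0 c d : mxentry (const_mx false : 'M_(r, s)) c d = false.
Proof. by rewrite /mxentry; do 2!case: insubP => // *; rewrite mxE. Qed.

Lemma mxentry_tr M c d : mxentry M^T c d = mxentry M d c.
Proof. by rewrite /mxentry; do 2!case: insubP => // *; rewrite mxE. Qed.

End MatrixEntries.

Lemma mxentry_row_mx r s1 s2 (M1 : 'M[bool]_(r, s1)) (M2 : 'M[bool]_(r, s2))
    c d :
  mxentry (row_mx M1 M2) c d =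
  if d < s1 then mxentry M1 c d else mxentry M2 c (d - s1).
Proof.
have [hc|hc] := ltnP c r; last by rewrite !mxentry_outl ?if_same.
have [hd|hd] := ltnP d (s1 + s2); last first.
  by rewrite !mxentry_outr ?leq_subRL ?if_same ?(leq_trans (leq_addr _ _) hd).
rewrite -[c]/(val (Ordinal hc)) -[d]/(val (Ordinal hd)) mxentry_ord.
case: splitP => [j|j] /= ed.
  have -> : Ordinal hd = lshift s2 j by apply: val_inj.
  by rewrite row_mxEl ed -mxentry_ord.
have -> : Ordinal hd = rshift s1 j by apply: val_inj.
by rewrite row_mxEr ed addKn -mxentry_ord.
Qed.

Lemma mxentry_col_mx r1 r2 s (M1 : 'M[bool]_(r1, s)) (M2 : 'M[bool]_(r2, s))
    c d :
  mxentry (col_mx M1 M2) c d =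
  if c < r1 then mxentry M1 c d else mxentry M2 (c - r1) d.
Proof. by rewrite -[LHS]mxentry_tr tr_col_mx mxentry_row_mx !mxentry_tr. Qed.

Lemma mxentry_block_mx r1 r2 s1 s2
    (Mul : 'M[bool]_(r1, s1)) (Mur : 'M[bool]_(r1, s2))
    (Mdl : 'M[bool]_(r2, s1)) (Mdr : 'M[bool]_(r2, s2)) c d :
  mxentry (block_mx Mul Mur Mdl Mdr) c d =
  if c < r1 then
    if d < s1 then mxentry Mul c d else mxentry Mur c (d - s1)
  else
    if d < s1 then mxentry Mdl (c - r1) d else mxentry Mdr (c - r1) (d - s1).
Proof. by rewrite mxentry_col_mx !mxentry_row_mx. Qed.

Lemma ctree_ind_in (P : ctree -> Prop) :
  (forall c ts, (forall u, u \in ts -> P u) -> P (GenTree.Node c ts)) ->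
  forall t, P t.
Proof.
move=> IHnode; elim/GenTree.tree_ind => [[]|c ts IHts]; apply: IHnode.
elim: ts IHts => //= u ts IHts [Pu Pts] v; rewrite inE => /orP[/eqP->//|].
exact: IHts.
Qed.

Lemma tsize_gt0 t : 0 < Defs.tsize t.
Proof. by case: t. Qed.

Lemma size_encode_le t : size (GenTree.encode t) <= 2 * Defs.tsize t.
Proof.
elim/ctree_ind_in: t => c ts IH /=.
rewrite size_rcons size_flatten /shape -map_comp mulnS add2n !ltnS.
rewrite !sumnE !big_map big_distrr /= !big_seq.
exact: leq_sum.
Qed.

Section ValidTrees.
Variables (m : nat) (A : 'M[bool]_m).

Lemma valid_root_color t : valid A t -> root_color t < m.
Proof. by case: t => [[]|c ts] /= /and3P[]. Qed.

Lemma encode_valid_sub t : valid A t ->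
  {subset GenTree.encode t <=
          [seq inl k | k <- iota 0 m.+1] : seq (nat + void)}.
Proof.
elim/ctree_ind_in: t => c ts IH /= /and3P[hc _ hts] x.
have hcode k :
    (inl k \in ([seq inl k | k <- iota 0 m.+1] : seq (nat + void))) = (k <= m).
  by rewrite mem_map ?mem_iota ?ltnS //; move=> ? ? [].
rewrite inE mem_rcons inE => /or3P[/eqP->|/eqP->|]; rewrite ?hcode //.
by move/flattenP => [_ /mapP[u hu ->]]; exact: (IH u hu (allP hts u hu) x).
Qed.

Lemma finite_valid_tsize n :
  finite_set [set t : ctree | valid A t /\ Defs.tsize t = n].
Proof.
pose dec (s : seq (nat + void)) : ctree :=
  odflt (GenTree.Node 0 [::]) (GenTree.decode s).
apply: (sub_finite_set _ (finite_image dec (finite_seqs_in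
  ([seq inl k | k <- iota 0 m.+1] : seq (nat + void)) (2 * n)))) => t [ht <-].
exists (GenTree.encode t); last by rewrite /dec GenTree.codeK.
by split; [exact: size_encode_le | exact: encode_valid_sub].
Qed.

Lemma tA0 : tA A 0 = 0.
Proof.
rewrite /tA (_ : [set t | _] = set0) ?fset_set0 //.
by apply/seteqP; split => // t [_]; have := tsize_gt0 t; case: (Defs.tsize t).
Qed.

Lemma tA_sum_tAi n : tA A n = \sum_(c < m) tAi A c n.
Proof.
pose F c := [set t : ctree | valid A t /\ Defs.tsize t = n /\ root_color t = c].
have finF c : finite_set (F c).
  by apply: sub_finite_set (finite_valid_tsize n) => t [? []].
have trivF : trivIset [set: nat] F.
  by move=> c d _ _ [t [[_ [_ <-]] [_ [_ <-]]]].
rewrite /tAi (trivIset_sum_card m finF trivF) -bigcup_mkord /tA.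
congr (#|` fset_set _|).
apply/seteqP; split=> [t [ht hn]|t [c _ [ht [hn _]]]] //.
by exists (root_color t); first exact: valid_root_color.
Qed.

End ValidTrees.

Section BlockMatrices.
Variables (m1 m2 m3 : nat) (A1 : 'M[bool]_m1) (A2 : 'M[bool]_(m1, m2))
  (B : 'M[bool]_(m3, m2)).
Local Notation A := (blockA A1 A2).
Local Notation A' := (blockA' A1 A2 B).

Lemma adj_blockA_hi c d : m1 <= c -> adj A c d = false.
Proof.
by move=> hc; rewrite adjE mxentry_block_mx ltnNge hc /zmx !mxentry0 if_same.
Qed.

Lemma adj_blockA'_lo c d : c < m1 + m2 -> adj A' c d = adj A c d.
Proof.
move=> hc; rewrite !adjE mxentry_block_mx hc.
by case: ltnP => hd //; rewrite /zmx mxentry0 mxentry_outr.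
Qed.

Lemma adj_blockA'_hi k d :
  adj A' (m1 + m2 + k) d = (m1 <= d) && mxentry B k (d - m1).
Proof.
rewrite adjE mxentry_block_mx ltnNge leq_addr /= addKn /zmx mxentry0.
rewrite mxentry_row_mx mxentry0.
have [hd|hd] := ltnP d m1; first by rewrite (ltn_addr _ hd).
by case: ltnP => hd2 //; rewrite mxentry_outr // leq_subRL.
Qed.

Lemma valid_blockA'_lo t : root_color t < m1 + m2 -> valid A' t = valid A t.
Proof.
elim/ctree_ind_in: t => c ts IH /= hc; rewrite hc (ltn_addr _ hc) /=.
rewrite (eq_all (a2 := fun u => adj A c (root_color u))); last first.
  by move=> u; apply: adj_blockA'_lo.
case hadj: (all _ ts) => //=; apply: eq_in_all => u hu; apply: IH => //.
by have /mxentry_bound/andP[] := allP hadj u hu.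
Qed.

Lemma tAi_blockA'_lo c n : c < m1 + m2 -> tAi A' c n = tAi A c n.
Proof.
move=> hc; rewrite /tAi; congr (#|` fset_set _|).
by apply/seteqP; split => t [ht [hn hr]]; split => //;
  [rewrite -valid_blockA'_lo | rewrite valid_blockA'_lo]; rewrite ?hr.
Qed.

Definition star (k p : nat) (f : {ffun 'I_p -> 'I_m2}) : ctree :=
  GenTree.Node (m1 + m2 + k)
    [seq GenTree.Node (m1 + j) [::] | j : 'I_m2 <- codom f].

Lemma star_inj k p : injective (@star k p).
Proof.
move=> f g [] /(inj_map _) eq_fg; apply/(can_inj fgraphK)/val_inj/eq_fg.
by move=> i j [/addnI/val_inj].
Qed.

Lemma tsize_star k p f : Defs.tsize (@star k p f) = p.+1.
Proof.
rewrite /= sumnE !big_map (eq_bigr (fun _ => 1)) // sum1_size.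
by rewrite -enumT size_enum_ord.
Qed.

Lemma valid_star (k : 'I_m3) p f :
  f \in ffun_on (B k) -> valid A' (@star k p f).
Proof.
move=> /ffun_onP Bf /=; rewrite ltn_add2l ltn_ord /=.
apply/andP; split; apply/allP => _ /mapP[_ /codomP[i ->] ->] /=.
  by rewrite adj_blockA'_hi leq_addr addKn mxentry_ord; exact: Bf.
by rewrite andbT ltn_addr // ltn_add2l.
Qed.

Lemma child_blockA'_hi (k : 'I_m3) u :
  valid A' u -> adj A' (m1 + m2 + k) (root_color u) ->
  exists2 j : 'I_m2, B k j & u = GenTree.Node (m1 + j) [::].
Proof.
case: u => [[]|d us] /= /and3P[_ hus _].
rewrite adj_blockA'_hi => /andP[hd hB]; have /andP[_ hj] := mxentry_bound hB.
exists (Ordinal hj); first by rewrite -mxentry_ord.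
rewrite /= subnKC //; congr GenTree.Node; case: us hus => //= v us /andP[].
by rewrite adj_blockA'_lo ?adj_blockA_hi // -(subnKC hd) ltn_add2l.
Qed.

Lemma star_of_valid (k : 'I_m3) p t :
  valid A' t -> Defs.tsize t = p.+1 -> root_color t = m1 + m2 + k ->
  exists2 f, f \in ffun_on (B k) & t = @star k p f.
Proof.
case: t => [[]|c ts] /= /and3P[_ hadj hval] [hsize] hc; subst c.
have [js Bjs ets] : exists2 js, all (B k) js &
    ts = [seq GenTree.Node (m1 + j) [::] | j : 'I_m2 <- js].
  apply: map_preim_seq => u hu.
  have [j Bj ->] := child_blockA'_hi (allP hval u hu) (allP hadj u hu).
  by exists j.
have hjs : size js == p.
  by rewrite -hsize ets sumnE !big_map (eq_bigr (fun _ => 1)) // sum1_size.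
exists [ffun i => tnth (Tuple hjs) i].
  by apply/ffun_onP => i; rewrite ffunE; apply: (allP Bjs); exact: mem_tnth.
rewrite ets /star; congr (GenTree.Node _ (map _ _)).
rewrite /codom /image_mem -[LHS](map_tnth_enum (Tuple hjs)).
by apply: eq_map => i; rewrite ffunE.
Qed.

Lemma tAi_blockA'_hi (k : 'I_m3) n : 0 < n ->
  tAi A' (m1 + m2 + k) n = (\sum_(j < m2) (B k j : nat)) ^ n.-1.
Proof.
case: n => // p _; rewrite /tAi.
have -> : [set t | valid A' t /\ Defs.tsize t = p.+1 /\
                   root_color t = m1 + m2 + k] =
          @star k p @` [set f | f \in ffun_on (B k)].
  apply/seteqP; split=> [t [ht [hn hr]]|_ [f Bf <-]].
    by have [f Bf ->] := star_of_valid ht hn hr; exists f.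
  by do !split; [exact: valid_star | exact: tsize_star].
rewrite (card_fset_set_inj_image (@star_inj k p)); last exact: finite_finset.
rewrite card_fset_set_fin card_ffun_on card_ord -sum1_card big_mkcond /=.
by congr (_ ^ _); apply: eq_bigr => j _; case: (B k j).
Qed.

End BlockMatrices.

Theorem theorem31 (m1 m2 m3 : nat) (hm1 : 0 < m1) (hm2 : 0 < m2) (hm3 : 0 < m3)
  (A1 : 'M[bool]_m1) (A2 : 'M[bool]_(m1, m2)) (B : 'M[bool]_(m3, m2)) :
  let A := blockA A1 A2 in
  let A' := blockA' A1 A2 B in
  [/\ tA A' 0 = tA A 0,
      (forall n, 0 < n ->
         tA A' n = tA A n + \sum_(k < m3) (\sum_(j < m2) (B k j : nat)) ^ n.-1),
      (forall i n, i < m1 + m2 -> 0 < n -> tAi A' i n = tAi A i n) &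
      (forall k : 'I_m3, forall n, 0 < n ->
         tAi A' (m1 + m2 + k) n = (\sum_(j < m2) (B k j : nat)) ^ n.-1)].
Proof.
move=> A A'; split.
- by rewrite !tA0.
- move=> n n_gt0; rewrite !tA_sum_tAi big_split_ord /=; congr (_ + _).
    by apply: eq_bigr => i _; apply: tAi_blockA'_lo.
  by apply: eq_bigr => k _; apply: tAi_blockA'_hi.
- by move=> i n hi _; apply: tAi_blockA'_lo.
- by move=> k n; apply: tAi_blockA'_hi.
Qed.
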